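(* Let $d=(d_1,\dots,d_n)$ (with $n\ge 1$) be a degree sequence and $\overline d=(\overline d_1,\dots,\overline d_n)=(n-1-d_n,\dots,n-1-d_1)$ its complementary sequence. Then $n\le m(d)+m(\overline d)\le n+1$. Moreover $m(d)+m(\overline d)=n+1$ if and only if $d_{m(d)}=m(d)-1$.
   Context: Degree sequences (of finite simple graphs, terms may be $0$) are listed in nonincreasing order. For such a sequence $d$, $m(d)=\max\{i : d_i\ge i-1\}$. *)

From mathcomp Require Import all_boot.
Set Implicit Arguments. Unset Strict Implicit. Unset Printing Implicit Defensive.

(* A sequence d = [d_1; ...; d_n] (stored 0-based: d_i = nth 0 d (i-1)) is a
   degree sequence if it is nonincreasing and there is a finite simple graph
   on the vertex set 'I_n (symmetric irreflexive relation) in which vertex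
   i-1 has degree d_i. *)
Definition is_degree_seq (d : seq nat) : Prop :=
  sorted geq d /\
  exists e : rel 'I_(size d),
    [/\ symmetric e, irreflexive e &
        forall i : 'I_(size d), nth 0 d i = #|[pred j | e i j]| ].

(* m(d) = max { i in 1..n : d_i >= i - 1 }  (0 if no such i, impossible for n >= 1). *)
Definition mdeg (d : seq nat) : nat :=
  \max_(i < size d | i <= nth 0 d i) i.+1.

(* complementary sequence: dbar_i = n - 1 - d_(n+1-i) *)
Definition compl_seq (d : seq nat) : seq nat :=
  rev (map (fun x => size d - 1 - x) d).

From mathcomp Require Import all_boot.
From mathcomp Require Import zify.

Set Implicit Arguments.
Unset Strict Implicit.
Unset Printing Implicit Defensive.

(* For a nonincreasing sequence s of length n, the indices j with
   j <= s_j form an initial segment [0, m(s)) of [0, n) (the "head"), while for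
   a degree sequence d the indices j with d_j <= j form a final segment
   [n - m(dbar), n) (the "tail"): indeed j <= dbar_i, for j = n-1-i, unfolds to
   d_j <= j because every degree is at most n-1.  Every index lies in the head
   or in the tail, so the two segments cover [0, n), i.e. m(d) + m(dbar) >= n.
   An index in both is a fixed point d_j = j, and a nonincreasing sequence has
   at most one fixed point, so the segments overlap in at most one index:
   m(d) + m(dbar) <= n + 1, with equality exactly when the last head index
   m(d)-1 is a fixed point.
   The file first proves the head characterisation of m for any nonincreasing
   sequence, then the cover/overlap facts for two abstract thresholds, then
   the facts on degree sequences and their complements, and finally lemma5. *)

Lemma nth_nonincr (s : seq nat) (i j : nat) :
  sorted geq s -> i <= j -> j < size s -> nth 0 s j <= nth 0 s i.
Proof.
move=> s_sorted le_ij lt_j.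
have geq_trans : transitive geq by move=> x y z le_xy le_zx; exact: leq_trans le_zx le_xy.
by apply: (sorted_leq_nth geq_trans leqnn) => //; rewrite inE (leq_ltn_trans le_ij).
Qed.

Lemma mdeg_head (s : seq nat) :
  sorted geq s -> 0 < size s ->
  0 < mdeg s <= size s /\
  forall i, i < size s -> (i < mdeg s) = (i <= nth 0 s i).
Proof.
move=> s_sorted s_gt0.
pose P := fun i : 'I_(size s) => i <= nth 0 s i.
have P0 : 0 < #|P| by apply/card_gt0P; exists (Ordinal s_gt0); rewrite /in_mem /P /=.
have [i0 Pi0 mdeg_i0] := @eq_bigmax_cond _ P (fun i : 'I_(size s) => i.+1) P0.
have mdegE : mdeg s = i0.+1 by exact: mdeg_i0.
split; first by rewrite mdegE ltn_ord.
move=> i lt_i; apply/idP/idP => [|Pi]; last first.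
  exact: (@leq_bigmax_cond _ P (fun i : 'I_(size s) => i.+1) (Ordinal lt_i) Pi).
rewrite mdegE ltnS => le_i_i0.
apply: (leq_trans le_i_i0); apply: (leq_trans Pi0).
exact: nth_nonincr.
Qed.

Section Thresholds.

Variables (s : seq nat) (m k : nat).
Hypothesis s_sorted : sorted geq s.
Hypothesis m_range : 0 < m <= size s.
Hypothesis k_le : k <= size s.
Hypothesis headP : forall j, j < size s -> (j < m) = (j <= nth 0 s j).
Hypothesis tailP : forall j, j < size s -> (k <= j) = (nth 0 s j <= j).

Lemma thresholds_cover : k <= m.
Proof.
rewrite leqNgt; apply/negP => lt_m_k.
have lt_m : m < size s by exact: leq_trans lt_m_k k_le.
have := headP lt_m; have := tailP lt_m; lia.
Qed.

Lemma last_head_fixed : k < m -> nth 0 s m.-1 = m.-1.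
Proof.
move=> lt_k_m; have lt_m1 : m.-1 < size s by lia.
have := headP lt_m1; have := tailP lt_m1; lia.
Qed.

(* Two consecutive fixed points are impossible, so the overlap is at most one. *)
Lemma thresholds_overlap : m <= k.+1.
Proof.
rewrite leqNgt; apply/negP => lt_k1_m.
have lt_m2 : m.-2 < size s by lia.
have fixed_m1 := last_head_fixed (ltnW lt_k1_m).
have := headP lt_m2; have := tailP lt_m2.
have := @nth_nonincr s m.-2 m.-1 s_sorted (leq_pred _) ltac:(lia).
lia.
Qed.

Lemma thresholds_meet : m = k.+1 <-> nth 0 s m.-1 = m.-1.
Proof.
split=> [m_eq|fixed]; first by apply: last_head_fixed; rewrite m_eq.
apply/eqP; rewrite eqn_leq thresholds_overlap /=.
have lt_m1 : m.-1 < size s by lia.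
have := tailP lt_m1; rewrite fixed leqnn; lia.
Qed.

End Thresholds.

Lemma degree_le (d : seq nat) (i : nat) :
  is_degree_seq d -> i < size d -> nth 0 d i <= (size d).-1.
Proof.
move=> [_ [e [_ e_irr degE]]] lt_i.
rewrite (degE (Ordinal lt_i)) -ltnS prednK; last exact: leq_ltn_trans lt_i.
rewrite -[X in _ < X](card_ord (size d)); apply: proper_card.
apply/properP; split; first exact/subsetP.
by exists (Ordinal lt_i) => //; rewrite inE /= e_irr.
Qed.

Lemma size_compl_seq (d : seq nat) : size (compl_seq d) = size d.
Proof. by rewrite /compl_seq size_rev size_map. Qed.

Lemma nth_compl_seq (d : seq nat) (i : nat) :
  i < size d -> nth 0 (compl_seq d) i = size d - 1 - nth 0 d (size d - 1 - i).
Proof.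
move=> lt_i; rewrite /compl_seq nth_rev size_map // (nth_map 0); last lia.
by congr (_ - _ - nth 0 d _); lia.
Qed.

Lemma compl_seq_sorted (d : seq nat) : sorted geq d -> sorted geq (compl_seq d).
Proof.
move=> d_sorted; rewrite /compl_seq rev_sorted.
apply: (@homo_sorted _ _ _ geq) d_sorted => x y /=; lia.
Qed.

Lemma mdeg_compl_tail (d : seq nat) :
  is_degree_seq d -> 0 < size d ->
  forall j, j < size d -> (size d - mdeg (compl_seq d) <= j) = (nth 0 d j <= j).
Proof.
move=> dP d_gt0 j lt_j.
have compl_gt0 : 0 < size (compl_seq d) by rewrite size_compl_seq.
have [/andP [_ dbar_le] headC] := mdeg_head (compl_seq_sorted (proj1 dP)) compl_gt0.
rewrite size_compl_seq in dbar_le headC.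
have lt_i : size d - 1 - j < size d by lia.
have := headC _ lt_i; rewrite nth_compl_seq //.
have -> : size d - 1 - (size d - 1 - j) = j by lia.
have := degree_le dP lt_j; lia.
Qed.

Theorem lemma5 (d : seq nat) :
  1 <= size d -> is_degree_seq d ->
  (size d <= mdeg d + mdeg (compl_seq d) <= (size d).+1)
  /\ (mdeg d + mdeg (compl_seq d) = (size d).+1 <->
      nth 0 d (mdeg d).-1 = (mdeg d).-1).
Proof.
move=> d_gt0 dP.
have [m_range headP] := mdeg_head (proj1 dP) d_gt0.
have compl_gt0 : 0 < size (compl_seq d) by rewrite size_compl_seq.
have [/andP [_ dbar_le] _] := mdeg_head (compl_seq_sorted (proj1 dP)) compl_gt0.
rewrite size_compl_seq in dbar_le.
have tailP := mdeg_compl_tail dP d_gt0.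
have k_le : size d - mdeg (compl_seq d) <= size d by exact: leq_subr.
have cover := thresholds_cover (proj1 dP) m_range k_le headP tailP.
have overlap := thresholds_overlap (proj1 dP) m_range k_le headP tailP.
have meet := thresholds_meet (proj1 dP) m_range k_le headP tailP.
split; first (apply/andP; split; lia).
rewrite -meet; lia.
Qed.
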